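(* Let a group $G$ act on a set $U$, and let $\mathcal{F}$ be a $G$-invariant family of finite subsets of $U$ whose cardinalities are uniformly bounded, i.e. $\max_{F\in\mathcal{F}}|F|<\infty$. Let $X\subseteq U$ be a finite system of representatives for $\mathcal{F}$, i.e. $X\cap F\neq\emptyset$ for every $F\in\mathcal{F}$. Then there exists a $G$-invariant system of representatives $Y\subseteq U$ for $\mathcal{F}$ (i.e. $gY=Y$ for all $g\in G$ and $Y\cap F\neq\emptyset$ for all $F\in\mathcal{F}$) such that $|Y|\le |X|\cdot\max_{F\in\mathcal{F}}|F|$.
   Context: A family $\mathcal{F}$ here is an unordered family, i.e. a set of subsets of $U$. It is $G$-invariant if $gF=\{gf\mid f\in F\}\in\mathcal{F}$ for all $g\in G$ and $F\in\mathcal{F}$. *)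

From Stdlib Require Import List Arith.
Import ListNotations.

Definition subset (U : Type) := U -> Prop.

Definition has_card {U : Type} (A : subset U) (n : nat) : Prop :=
  exists l : list U, NoDup l /\ length l = n /\ (forall x, A x <-> In x l).

Definition is_group {G : Type} (mul : G -> G -> G) (one : G) (inv : G -> G) : Prop :=
  (forall a b c, mul a (mul b c) = mul (mul a b) c) /\
  (forall a, mul one a = a) /\ (forall a, mul a one = a) /\
  (forall a, mul (inv a) a = one) /\ (forall a, mul a (inv a) = one).

Definition is_action {G U : Type} (mul : G -> G -> G) (one : G)
  (act : G -> U -> U) : Prop :=
  (forall x, act one x = x) /\
  (forall g h x, act (mul g h) x = act g (act h x)).

Definition img {G U : Type} (act : G -> U -> U) (g : G) (A : subset U) : subset U :=
  fun u => exists a, A a /\ u = act g a.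

Definition same_set {U : Type} (A B : subset U) : Prop := forall u, A u <-> B u.

Definition family_invariant {G U : Type} (act : G -> U -> U)
  (Fam : subset U -> Prop) : Prop :=
  forall g F, Fam F -> exists F', Fam F' /\ same_set F' (img act g F).

Definition set_invariant {G U : Type} (act : G -> U -> U) (Y : subset U) : Prop :=
  forall g, same_set (img act g Y) Y.

Definition represents {U : Type} (Y : subset U) (Fam : subset U -> Prop) : Prop :=
  forall F, Fam F -> exists u, Y u /\ F u.

From Stdlib Require Import List Arith Lia Wf_nat FinFun Classical ClassicalEpsilon.
Import ListNotations.

(* By B. H. Neumann's lemma, finitely many points with infinite orbits can be moved off
   any finite set by one group element, which may moreover be taken to fix a given finite
   tuple of points with finite orbits.  Since every translate gF meets X, it follows that
   every translate of F meets X in a point with finite orbit.  Averaging over the finite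
   orbit of the tuple P of finite-orbit points of F (|P| <= m), some point of P has a
   finite orbit O with |O| <= m |O ∩ X|.  Y is the union of all such orbits: it is
   G-invariant, meets every F, and since distinct orbits meet X in disjoint sets,
   |Y| <= m |X|. *)

Definition holds (P : Prop) : bool :=
  if excluded_middle_informative P then true else false.

Lemma holdsP (P : Prop) : reflect P (holds P).
Proof.
  unfold holds; destruct (excluded_middle_informative P); constructor; assumption.
Qed.

Lemma holds_iff (P : Prop) : holds P = true <-> P.
Proof. symmetry; apply Bool.reflect_iff, holdsP. Qed.

Definition count {A : Type} (P : A -> Prop) (l : list A) : nat :=
  length (filter (fun x => holds (P x)) l).

Definition enumerates {A : Type} (l : list A) (P : A -> Prop) : Prop :=
  NoDup l /\ forall x, P x <-> In x l.

Section Counting.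
Context {A : Type}.

Lemma count_cons (P : A -> Prop) (x : A) (l : list A) :
  count P (x :: l) = (if holds (P x) then 1 else 0) + count P l.
Proof. unfold count; simpl; destruct (holds (P x)); reflexivity. Qed.

Lemma count_ext_in (P Q : A -> Prop) (l : list A) :
  (forall x, In x l -> (P x <-> Q x)) -> count P l = count Q l.
Proof.
  induction l as [|x l IH]; intros H; [reflexivity|].
  rewrite !count_cons, IH by (intros y Hy; apply H; right; exact Hy).
  specialize (H x (or_introl eq_refl)).
  destruct (holdsP (P x)), (holdsP (Q x)); tauto.
Qed.

Lemma count_none (P : A -> Prop) (l : list A) :
  (forall x, In x l -> ~ P x) -> count P l = 0.
Proof.
  induction l as [|x l IH]; intros H; [reflexivity|].
  rewrite count_cons, IH by (intros y Hy; apply H; right; exact Hy).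
  destruct (holdsP (P x)) as [Px|]; [destruct (H x (or_introl eq_refl) Px)|reflexivity].
Qed.

Lemma count_all (P : A -> Prop) (l : list A) :
  (forall x, In x l -> P x) -> count P l = length l.
Proof.
  induction l as [|x l IH]; intros H; [reflexivity|].
  rewrite count_cons, IH by (intros y Hy; apply H; right; exact Hy).
  destruct (holdsP (P x)) as [|nPx]; [reflexivity|destruct (nPx (H x (or_introl eq_refl)))].
Qed.

Lemma count_split (P Q : A -> Prop) (l : list A) :
  count P l = count (fun x => P x /\ Q x) l + count (fun x => P x /\ ~ Q x) l.
Proof.
  induction l as [|x l IH]; [reflexivity|].
  rewrite !count_cons, IH.
  destruct (holdsP (P x)), (holdsP (Q x)), (holdsP (P x /\ Q x)), (holdsP (P x /\ ~ Q x));
    first [tauto | lia].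
Qed.

Lemma count_compl (P : A -> Prop) (l : list A) :
  count P l + count (fun x => ~ P x) l = length l.
Proof.
  induction l as [|x l IH]; [reflexivity|].
  rewrite !count_cons; simpl.
  destruct (holdsP (P x)), (holdsP (~ P x)); first [tauto | lia].
Qed.

Lemma count_filter (P Q : A -> Prop) (l : list A) :
  count P (filter (fun x => holds (Q x)) l) = count (fun x => P x /\ Q x) l.
Proof.
  induction l as [|x l IH]; [reflexivity|]; simpl.
  rewrite count_cons, <- IH.
  destruct (holdsP (Q x)); rewrite ?count_cons;
    destruct (holdsP (P x)), (holdsP (P x /\ Q x)); first [tauto | lia].
Qed.

Lemma enumerates_ext (l : list A) (P Q : A -> Prop) :
  enumerates l P -> (forall x, P x <-> Q x) -> enumerates l Q.
Proof. intros [Hl El] E; split; [exact Hl|]; intros x; rewrite <- E; apply El. Qed.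

Lemma enumerates_length (l l' : list A) (P : A -> Prop) :
  enumerates l P -> enumerates l' P -> length l = length l'.
Proof.
  intros [Hl El] [Hl' El'].
  apply Nat.le_antisymm; apply NoDup_incl_length; auto; intros x Hx.
  - apply El', El, Hx.
  - apply El, El', Hx.
Qed.

Lemma enumerates_filter (l : list A) (P Q : A -> Prop) :
  enumerates l P -> enumerates (filter (fun x => holds (Q x)) l) (fun x => P x /\ Q x).
Proof.
  intros [Hl El]; split; [apply NoDup_filter, Hl|].
  intros x; rewrite filter_In, holds_iff, El; reflexivity.
Qed.

Lemma count_enumerates (l l' : list A) (P Q : A -> Prop) :
  enumerates l P -> enumerates l' Q -> count Q l = count P l'.
Proof.
  intros Hl Hl'. apply (enumerates_length _ _ (fun x => P x /\ Q x)).
  - apply enumerates_filter, Hl.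
  - eapply enumerates_ext; [apply enumerates_filter, Hl'|]; intros x; tauto.
Qed.

Lemma enumerates_exists (P : A -> Prop) (L : list A) :
  (forall x, P x -> In x L) -> exists l, enumerates l P.
Proof.
  intros HL.
  exists (nodup (fun x y => excluded_middle_informative (x = y))
             (filter (fun x => holds (P x)) L)).
  split; [apply NoDup_nodup|].
  intros x; rewrite nodup_In, filter_In, holds_iff; split; [|tauto].
  intros Px; split; [apply HL|]; exact Px.
Qed.

End Counting.

Section Averaging.
Context {A I : Type}.

Lemma list_sum_map_add (f g : I -> nat) (l : list I) :
  list_sum (map (fun i => f i + g i) l) = list_sum (map f l) + list_sum (map g l).
Proof. induction l as [|i l IH]; simpl; lia. Qed.

Lemma list_sum_map_scale (k : nat) (f : I -> nat) (l : list I) :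
  list_sum (map (fun i => k * f i) l) = k * list_sum (map f l).
Proof. induction l as [|i l IH]; simpl; lia. Qed.

Lemma le_list_sum_map (f : I -> nat) (l : list I) (i : I) :
  In i l -> f i <= list_sum (map f l).
Proof.
  induction l as [|j l IH]; simpl; intros Hi; [contradiction|].
  destruct Hi as [<-|Hi]; [lia|]. specialize (IH Hi); lia.
Qed.

Lemma list_sum_map_lt (f : I -> nat) (l : list I) (c : nat) :
  l <> [] -> (forall i, In i l -> f i < c) -> list_sum (map f l) < length l * c.
Proof.
  induction l as [|i l IH]; intros Hl H; [contradiction|]; simpl.
  pose proof (H i (or_introl eq_refl)).
  destruct l as [|j l]; [simpl; lia|].
  enough (list_sum (map f (j :: l)) < length (j :: l) * c) by lia.
  apply IH; [discriminate|]. intros k Hk; apply H; right; exact Hk.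
Qed.

Lemma length_le_sum_count (Q : I -> A -> Prop) (Is : list I) (l : list A) :
  (forall t, In t l -> exists i, In i Is /\ Q i t) ->
  length l <= list_sum (map (fun i => count (Q i) l) Is).
Proof.
  induction l as [|t l IH]; intros Hcov; simpl; [lia|].
  rewrite (map_ext _ (fun i => (if holds (Q i t) then 1 else 0) + count (Q i) l))
    by (intros i; apply count_cons).
  rewrite list_sum_map_add.
  destruct (Hcov t (or_introl eq_refl)) as [i [Hi Hq]].
  pose proof (le_list_sum_map (fun i => if holds (Q i t) then 1 else 0) Is i Hi) as Ht.
  cbv beta in Ht; apply holds_iff in Hq; rewrite Hq in Ht.
  specialize (IH (fun t' Ht' => Hcov t' (or_intror Ht'))); lia.
Qed.

Lemma exists_large_count (Q : I -> A -> Prop) (Is : list I) (l : list A) :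
  l <> [] -> (forall t, In t l -> exists i, In i Is /\ Q i t) ->
  exists i, In i Is /\ length l <= length Is * count (Q i) l.
Proof.
  intros Hl Hcov. apply NNPP; intros Hsmall.
  assert (HIs : Is <> []).
  { destruct l as [|t l]; [contradiction|].
    destruct (Hcov t (or_introl eq_refl)) as [i [Hi _]]; intros ->; contradiction. }
  assert (Hlt : list_sum (map (fun i => length Is * count (Q i) l) Is) < length Is * length l).
  { apply list_sum_map_lt; [exact HIs|]. intros i Hi.
    apply Nat.nle_gt; intros Hle; apply Hsmall; exists i; auto. }
  rewrite list_sum_map_scale in Hlt.
  pose proof (length_le_sum_count Q Is l Hcov) as Hsum.
  apply (Nat.mul_le_mono_l _ _ (length Is)) in Hsum; lia.
Qed.

End Averaging.

Lemma count_by_fibers {A B : Type} (pi : A -> B) (l : list A) (O : list B) (c : nat)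
    (P : B -> Prop) :
  NoDup O ->
  (forall t, In t l -> P (pi t) -> In (pi t) O) ->
  (forall b, In b O -> count (fun t => pi t = b) l = c) ->
  count (fun t => P (pi t)) l = c * count P O.
Proof.
  intros HO; revert P; induction HO as [|b O Hb HO IH]; intros P Hin Hc.
  - rewrite Nat.mul_0_r; apply count_none; intros t Ht HP; exact (Hin t Ht HP).
  - rewrite (count_split _ (fun t => pi t = b)), count_cons.
    rewrite (IH (fun x => P x /\ x <> b)).
    + rewrite (count_ext_in (fun x => P x /\ x <> b) P O)
        by (intros x Hx; split; [tauto|intros; split; [|intros ->]; auto]).
      destruct (holdsP (P b)) as [Pb|nPb].
      * rewrite (count_ext_in _ (fun t => pi t = b)) by (intros t _; split; [tauto|intros <-; auto]).
        rewrite (Hc b (or_introl eq_refl)); lia.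
      * rewrite count_none by (intros t _ [HP <-]; contradiction); lia.
    + intros t Ht [HP Hne]. destruct (Hin t Ht HP) as [E|]; [contradiction (Hne (eq_sym E))|auto].
    + intros b' Hb'; apply Hc; right; exact Hb'.
Qed.

Lemma finite_choice {A B : Type} (R : A -> B -> Prop) (l : list A) :
  exists T : list B, forall a, In a l -> (exists b, R a b) -> exists b, In b T /\ R a b.
Proof.
  induction l as [|a l [T HT]]; [exists []; intros a []|].
  destruct (classic (exists b, R a b)) as [[b Hb]|Hnone].
  - exists (b :: T). intros a' [<-|Ha'] Hex; [exists b; simpl; auto|].
    destruct (HT a' Ha' Hex) as [b' [? ?]]; exists b'; simpl; auto.
  - exists T. intros a' [<-|Ha'] Hex; [contradiction|auto].
Qed.

Section Saturation.
Context {U : Type} (R : U -> U -> Prop).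
Hypotheses (R_refl : forall x, R x x) (R_sym : forall x y, R x y -> R y x)
  (R_trans : forall x y z, R x y -> R y z -> R x z).

(* Induction on [L], removing the whole class of its first element at each step. *)
Lemma card_union_of_classes_le (m : nat) (L : list U) : forall Y : subset U,
  NoDup L -> (forall u v, Y u -> R u v -> Y v) ->
  (forall u, Y u -> exists O, enumerates O (R u) /\ length O <= m * count (R u) L) ->
  exists lY, enumerates lY Y /\ length lY <= m * length L.
Proof.
  induction L as [L IH] using (induction_ltof1 _ (@length U)).
  intros Y NDL HY Hcls.
  destruct L as [|x L0].
  - exists []; split; [split; [constructor|]|simpl; lia].
    intros u; split; [|intros []]; intros Yu.
    destruct (Hcls u Yu) as [O [[_ EO] HO]].
    assert (Hu : In u O) by apply EO, R_refl.
    destruct O as [|o O]; [contradiction|]; cbn in HO; lia.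
  - set (L := x :: L0) in *.
    set (L' := filter (fun v => holds (~ R x v)) L).
    assert (Hsplit : count (R x) L + length L' = length L) by apply count_compl.
    assert (Hx : 0 < count (R x) L).
    { unfold L; rewrite count_cons.
      destruct (holdsP (R x x)) as [|nRxx]; [lia|destruct (nRxx (R_refl x))]. }
    destruct (IH L' ltac:(unfold ltof; lia) (fun u => Y u /\ ~ R x u)) as [lY' [[NDY' EY'] HlY']].
    + apply NoDup_filter, NDL.
    + intros u v [Yu Hxu] Huv; split; [exact (HY u v Yu Huv)|eauto].
    + intros u [Yu Hxu]. destruct (Hcls u Yu) as [O [HO Hlen]].
      exists O; split; [exact HO|].
      unfold L'; rewrite count_filter, (count_ext_in _ (R u)); [exact Hlen|].
      intros v _; split; [tauto|]; intros Huv; split; [exact Huv|eauto].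
    + destruct (classic (Y x)) as [Yx|nYx].
      * destruct (Hcls x Yx) as [Ox [[NDx Ex] HOx]].
        exists (Ox ++ lY'); split; [split|].
        -- apply NoDup_app; auto. intros v Hv Hv'; apply Ex in Hv; apply EY' in Hv'; tauto.
        -- intros u; rewrite in_app_iff, <- Ex, <- EY'.
           split; [|intros [Hxu|[Yu _]]; eauto].
           intros Yu; destruct (classic (R x u)); auto.
        -- rewrite length_app; nia.
      * exists lY'; split; [split; [exact NDY'|]|nia].
        intros u; rewrite <- EY'; split; [|tauto].
        intros Yu; split; [exact Yu|]; intros Hxu; apply nYx; eauto.
Qed.

End Saturation.

Definition orbit {G V : Type} (actV : G -> V -> V) (a : V) : subset V :=
  fun v => exists g, v = actV g a.

Definition finite_orbit {G V : Type} (actV : G -> V -> V) (a : V) : Prop :=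
  exists L : list V, forall g, In (actV g a) L.

Definition stabilizer {G V : Type} (actV : G -> V -> V) (v : V) : G -> Prop :=
  fun g => actV g v = v.

Definition infinite_orbit_in {G V : Type} (S : G -> Prop) (actV : G -> V -> V) (a : V) : Prop :=
  forall L : list V, exists g, S g /\ ~ In (actV g a) L.

Definition dense_orbit {G U : Type} (act : G -> U -> U) (X : subset U) (m : nat) (u : U) : Prop :=
  exists O, enumerates O (orbit act u) /\ length O <= m * count X O.

Lemma finite_orbit_enumerated {G V : Type} (actV : G -> V -> V) (a : V) :
  finite_orbit actV a -> exists O, enumerates O (orbit actV a).
Proof. intros [L HL]; apply (enumerates_exists _ L); intros v [g ->]; apply HL. Qed.

Lemma finite_orbit_representatives {G V : Type} (actV : G -> V -> V) (a : V) :
  finite_orbit actV a -> exists T, forall g, exists t, In t T /\ actV t a = actV g a.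
Proof.
  intros [L HL]. destruct (finite_choice (fun b t => actV t a = b) L) as [T HT].
  exists T; intros g. exact (HT _ (HL g) (ex_intro _ g eq_refl)).
Qed.

Lemma tuple_finite_orbit {G U : Type} (act : G -> U -> U) (P : list U) :
  (forall p, In p P -> finite_orbit act p) -> finite_orbit (fun g => map (act g)) P.
Proof.
  induction P as [|p P IH]; intros HP; [exists [[]]; left; reflexivity|].
  destruct (HP p (or_introl eq_refl)) as [L HL].
  destruct IH as [LP HLP]; [intros q Hq; apply HP; right; exact Hq|].
  exists (map (fun '(a, t) => a :: t) (list_prod L LP)); intros g.
  apply in_map_iff; exists (act g p, map (act g) P); split; [reflexivity|].
  apply in_prod; auto.
Qed.

Section GroupActions.
Context {G : Type} {mul : G -> G -> G} {one : G} {inv : G -> G}.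
Hypothesis Hgrp : is_group mul one inv.

Section OneAction.
Context {V : Type} (actV : G -> V -> V).
Hypothesis HV : is_action mul one actV.

Lemma act_one x : actV one x = x.
Proof. apply HV. Qed.

Lemma act_mul g h x : actV (mul g h) x = actV g (actV h x).
Proof. apply HV. Qed.

Lemma act_invK g x : actV (inv g) (actV g x) = x.
Proof. destruct Hgrp as (_ & _ & _ & Hl & _); rewrite <- act_mul, Hl; apply act_one. Qed.

Lemma act_Kinv g x : actV g (actV (inv g) x) = x.
Proof. destruct Hgrp as (_ & _ & _ & _ & Hr); rewrite <- act_mul, Hr; apply act_one. Qed.

Lemma act_inj g : Injective (actV g).
Proof. intros x y E; rewrite <- (act_invK g x), E; apply act_invK. Qed.

Lemma orbit_refl a : orbit actV a a.
Proof. exists one; symmetry; apply act_one. Qed.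

Lemma orbit_sym a b : orbit actV a b -> orbit actV b a.
Proof. intros [g ->]; exists (inv g); symmetry; apply act_invK. Qed.

Lemma orbit_trans a b c : orbit actV a b -> orbit actV b c -> orbit actV a c.
Proof. intros [g ->] [h ->]; exists (mul h g); symmetry; apply act_mul. Qed.

Lemma orbit_act g a v : orbit actV (actV g a) v <-> orbit actV a v.
Proof.
  split; intros H.
  - apply (orbit_trans _ (actV g a)); [exists g; reflexivity|exact H].
  - apply (orbit_trans _ a); [apply orbit_sym; exists g; reflexivity|exact H].
Qed.

Lemma set_invariant_of_act (Y : subset V) :
  (forall g u, Y (actV g u) <-> Y u) -> set_invariant actV Y.
Proof.
  intros HY g u; split.
  - intros [a [Ya ->]]; apply HY, Ya.
  - intros Yu; exists (actV (inv g) u); split; [apply HY, Yu|symmetry; apply act_Kinv].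
Qed.

Lemma map_is_action : is_action mul one (fun g => map (actV g)).
Proof.
  split; intros.
  - rewrite (map_ext _ id) by apply act_one; apply map_id.
  - rewrite map_map; apply map_ext; intros; apply act_mul.
Qed.

Lemma stabilizer_one v : stabilizer actV v one.
Proof. apply act_one. Qed.

Lemma stabilizer_mul v g h :
  stabilizer actV v g -> stabilizer actV v h -> stabilizer actV v (mul g h).
Proof. unfold stabilizer; intros Hg Hh; rewrite act_mul, Hh; exact Hg. Qed.

Lemma stabilizer_inv v g : stabilizer actV v g -> stabilizer actV v (inv g).
Proof. unfold stabilizer; intros Hg; rewrite <- Hg at 1; apply act_invK. Qed.

Lemma neumann_separation (S : G -> Prop) :
  S one -> (forall g h, S g -> S h -> S (mul g h)) -> (forall g, S g -> S (inv g)) ->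
  forall A : list V, (forall a, In a A -> infinite_orbit_in S actV a) ->
  forall B : list V, exists g, S g /\ forall a, In a A -> ~ In (actV g a) B.
Proof.
  intros S1 Smul Sinv A; induction A as [|a A IH]; intros HA B.
  { exists one; split; [exact S1|intros a []]. }
  destruct (HA a (or_introl eq_refl) B) as [y [Sy Hy]].
  destruct (finite_choice (fun b x => S x /\ actV x a = b) B) as [Xs HXs].
  set (B' := B ++ flat_map (fun x => map (actV (mul x (inv y))) B) Xs).
  destruct (IH (fun a' Ha' => HA a' (or_intror Ha')) B') as [g [Sg Hg]].
  destruct (classic (In (actV g a) B)) as [Hga|Hga].
  - destruct (HXs _ Hga (ex_intro _ g (conj Sg eq_refl))) as [x [Hx [Sx Hxa]]].
    exists (mul y (mul (inv x) g)); split; [auto|].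
    intros a0 [<-|Ha0] Hin.
    + apply Hy; rewrite !act_mul, <- Hxa, act_invK in Hin; exact Hin.
    + apply (Hg a0 Ha0), in_or_app; right.
      apply in_flat_map; exists x; split; [exact Hx|].
      apply in_map_iff; exists (actV (mul y (mul (inv x) g)) a0); split; [|exact Hin].
      rewrite !act_mul, act_invK, act_Kinv; reflexivity.
  - exists g; split; [exact Sg|].
    intros a0 [<-|Ha0] Hin; [contradiction|].
    apply (Hg a0 Ha0), in_or_app; left; exact Hin.
Qed.

End OneAction.

Section TwoActions.
Context {V W : Type} (actV : G -> V -> V) (actW : G -> W -> W).
Hypotheses (HV : is_action mul one actV) (HW : is_action mul one actW).

Lemma stabilizer_infinite_orbit (v : V) (w : W) :
  finite_orbit actV v -> ~ finite_orbit actW w ->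
  infinite_orbit_in (stabilizer actV v) actW w.
Proof.
  intros Hv Hw L. apply NNPP; intros Hin. apply Hw.
  destruct (finite_orbit_representatives actV v Hv) as [T HT].
  exists (flat_map (fun t => map (actW t) L) T); intros g.
  destruct (HT g) as [t [Ht Htg]].
  assert (Hs : stabilizer actV v (mul (inv t) g)).
  { unfold stabilizer; rewrite act_mul, <- Htg by exact HV; apply act_invK; exact HV. }
  apply in_flat_map; exists t; split; [exact Ht|].
  apply in_map_iff; exists (actW (mul (inv t) g) w); split.
  - rewrite (act_mul actW HW), (act_Kinv actW HW); reflexivity.
  - apply NNPP; intros Hout; apply Hin; exists (mul (inv t) g); split; assumption.
Qed.

Section Fibers.
Variables (pi : V -> W) (t0 : V) (T : list V).
Hypothesis Hpi : forall g, pi (actV g t0) = actW g (pi t0).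
Hypothesis HT : enumerates T (orbit actV t0).

Lemma fiber_le_act (b : W) (h : G) :
  count (fun t => pi t = b) T <= count (fun t => pi t = actW h b) T.
Proof.
  destruct HT as [NDT ET]. unfold count.
  rewrite <- (length_map (actV h)).
  apply NoDup_incl_length.
  - apply Injective_map_NoDup; [apply act_inj, HV|apply NoDup_filter, NDT].
  - intros t' Ht'. apply in_map_iff in Ht' as [t [<- Ht]].
    apply filter_In in Ht as [Ht Hb]; cbv beta in Hb; rewrite holds_iff in Hb.
    apply ET in Ht as [g ->].
    apply filter_In; split.
    + apply ET; exists (mul h g); symmetry; apply (act_mul actV HV).
    + apply holds_iff.
      rewrite <- (act_mul actV HV), Hpi, (act_mul actW HW), <- Hpi, Hb; reflexivity.
Qed.

Lemma fiber_orbit_const (b : W) :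
  orbit actW (pi t0) b -> count (fun t => pi t = b) T = count (fun t => pi t = pi t0) T.
Proof.
  intros [g ->]. apply Nat.le_antisymm.
  - pose proof (fiber_le_act (actW g (pi t0)) (inv g)) as H.
    rewrite (act_invK actW HW) in H; exact H.
  - apply fiber_le_act.
Qed.

(* Each point of the orbit of [pi t0] has the same number of preimages in the orbit of [t0]. *)
Lemma count_orbit_preimage (O : list W) (Q : W -> Prop) :
  enumerates O (orbit actW (pi t0)) ->
  count (fun t => Q (pi t)) T * length O = length T * count Q O.
Proof.
  intros [NDO EO].
  set (c := count (fun t => pi t = pi t0) T).
  assert (Hmaps : forall t, In t T -> In (pi t) O).
  { intros t Ht; apply EO; apply HT in Ht as [g ->]; rewrite Hpi; exists g; reflexivity. }
  assert (Hfib : forall b, In b O -> count (fun t => pi t = b) T = c)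
    by (intros b Hb; apply fiber_orbit_const, EO, Hb).
  assert (HQ : count (fun t => Q (pi t)) T = c * count Q O)
    by (apply count_by_fibers; auto).
  assert (Hall : length T = c * length O).
  { rewrite <- (count_all (fun _ => True) T), <- (count_all (fun _ => True) O) by auto.
    apply (count_by_fibers pi T O c (fun _ => True)); auto. }
  rewrite HQ, Hall; ring.
Qed.

End Fibers.
End TwoActions.

Section Representatives.
Context {U : Type} (act : G -> U -> U).
Hypothesis Hact : is_action mul one act.

Lemma finite_orbit_of_act g a : finite_orbit act (act g a) -> finite_orbit act a.
Proof.
  intros [L HL]; exists L; intros h.
  rewrite <- (act_invK act Hact g a), <- (act_mul act Hact); apply HL.
Qed.

Lemma dense_orbit_act (Z : subset U) (m : nat) g u :
  dense_orbit act Z m (act g u) <-> dense_orbit act Z m u.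
Proof.
  split; intros [O [HO Hlen]]; exists O; split; auto;
    eapply enumerates_ext; eauto; intros v; rewrite (orbit_act act Hact); tauto.
Qed.

Lemma dense_orbits_card_le (Z : subset U) (lZ : list U) (m : nat) :
  enumerates lZ Z ->
  exists lY, enumerates lY (dense_orbit act Z m) /\ length lY <= m * length lZ.
Proof.
  intros [NDZ EZ].
  apply (card_union_of_classes_le (orbit act)
           (orbit_refl act Hact) (orbit_sym act Hact) (orbit_trans act Hact));
    [exact NDZ| |].
  - intros u v Hu [g ->]; apply dense_orbit_act, Hu.
  - intros u [O [HO Hlen]]; exists O; split; [exact HO|].
    rewrite <- (count_enumerates O lZ (orbit act u) Z HO (conj NDZ EZ)); exact Hlen.
Qed.

(* Every translate gP has a coordinate in Z, so some coordinate i lands in Z for at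
   least a 1/|P| share of the orbit of P; by [count_orbit_preimage] that share is
   |O ∩ Z| / |O| for the orbit O of the i-th point. *)
Lemma exists_dense_orbit (Z : subset U) (P : list U) :
  (forall p, In p P -> finite_orbit act p) ->
  (forall g, exists p, In p P /\ Z (act g p)) ->
  exists p, In p P /\ dense_orbit act Z (length P) p.
Proof.
  intros HP Hcov.
  destruct (Hcov one) as [d _].
  set (Lact := fun g => map (act g)).
  assert (HLact : is_action mul one Lact) by apply (map_is_action act Hact).
  destruct (finite_orbit_enumerated Lact P (tuple_finite_orbit act P HP)) as [T HT].
  assert (Hnth : forall i g, i < length P -> nth i (Lact g P) d = act g (nth i P d)).
  { intros i g Hi; unfold Lact.
    rewrite (nth_indep _ d (act g d)) by (rewrite length_map; exact Hi); apply map_nth. }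
  assert (HTne : T <> []).
  { pose proof (proj1 (proj2 HT P) (orbit_refl Lact HLact P)) as HPT.
    intros E; rewrite E in HPT; exact HPT. }
  destruct (exists_large_count (fun i t => Z (nth i t d)) (seq 0 (length P)) T HTne)
    as [i [Hi Hlarge]].
  { intros t Ht; apply HT in Ht as [g ->].
    destruct (Hcov g) as [p [Hp Zp]]; destruct (In_nth P p d Hp) as [i [Hi Hip]].
    exists i; split; [apply in_seq; lia|]; rewrite Hnth, Hip; auto. }
  rewrite length_seq in Hlarge; apply in_seq in Hi as [_ Hi]; simpl in Hi.
  destruct (finite_orbit_enumerated act (nth i P d) (HP _ (nth_In P d Hi))) as [O HO].
  exists (nth i P d); split; [apply nth_In, Hi|]; exists O; split; [exact HO|].
  pose proof (count_orbit_preimage Lact act HLact Hact (fun t => nth i t d) P T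
                (fun g => Hnth i g Hi) HT O Z HO) as Hcount.
  apply (Nat.mul_le_mono_pos_l _ _ (length T)); [destruct T; [contradiction|simpl; lia]|].
  nia.
Qed.

Section Family.
Variables (Fam : subset U -> Prop) (X : subset U) (lX : list U).
Hypotheses (Hinv : family_invariant act Fam) (HlX : forall x, X x -> In x lX)
  (Hrep : represents X Fam).

(* By Neumann's lemma some g fixes the finite-orbit points of F and moves
   all others off X; X meets gF, necessarily at a fixed point. *)
Lemma exists_finite_orbit_rep (F : subset U) (lF : list U) :
  Fam F -> (forall x, F x -> In x lF) -> exists f, F f /\ finite_orbit act f /\ X f.
Proof.
  intros HF HlF.
  set (P := filter (fun p => holds (finite_orbit act p)) lF).
  set (A := filter (fun p => holds (~ finite_orbit act p)) lF).
  set (Lact := fun g => map (act g)).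
  assert (HLact : is_action mul one Lact) by apply (map_is_action act Hact).
  assert (HP : finite_orbit Lact P).
  { apply tuple_finite_orbit; intros p Hp.
    apply filter_In in Hp as [_ Hp]; cbv beta in Hp; rewrite holds_iff in Hp; exact Hp. }
  destruct (neumann_separation act Hact (stabilizer Lact P) (stabilizer_one Lact HLact P)
              (stabilizer_mul Lact HLact P) (stabilizer_inv Lact HLact P) A)
    with (B := lX) as [g [Sg Hg]].
  { intros a Ha; apply filter_In in Ha as [_ Ha]; cbv beta in Ha; rewrite holds_iff in Ha.
    apply (stabilizer_infinite_orbit Lact act HLact Hact); assumption. }
  destruct (Hinv g F HF) as [F' [HF' EF']].
  destruct (Hrep F' HF') as [u [Xu F'u]].
  apply EF' in F'u as [f [Ff ->]].
  assert (Hf : In f lF) by (apply HlF, Ff).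
  exists f; split; [exact Ff|].
  destruct (classic (finite_orbit act f)) as [Hfin|Hinf].
  - assert (HfP : In f P) by (apply filter_In; rewrite holds_iff; auto).
    assert (Hfix : map (act g) P = map id P) by (rewrite map_id; exact Sg).
    rewrite (proj1 map_ext_in_iff Hfix f HfP) in Xu; auto.
  - exfalso; apply (Hg f); [|apply HlX, Xu].
    apply filter_In; rewrite holds_iff; auto.
Qed.

Lemma translate_meets_rep (F : subset U) (lF : list U) (g : G) :
  Fam F -> (forall x, F x -> In x lF) ->
  exists p, F p /\ finite_orbit act p /\ X (act g p).
Proof.
  intros HF HlF.
  destruct (Hinv g F HF) as [F' [HF' EF']].
  destruct (exists_finite_orbit_rep F' (map (act g) lF) HF') as [f' [F'f' [Hfin Xf']]].
  { intros x Hx; apply EF' in Hx as [f [Ff ->]]; apply in_map, HlF, Ff. }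
  apply EF' in F'f' as [f [Ff ->]].
  exists f; split; [exact Ff|split; [apply (finite_orbit_of_act g), Hfin|exact Xf']].
Qed.

Lemma exists_dense_member (m : nat)
  (Hbound : forall F, Fam F -> exists k, has_card F k /\ k <= m) (F : subset U) :
  Fam F -> exists f, F f /\ dense_orbit act X m f.
Proof.
  intros HF.
  destruct (Hbound F HF) as [k [[lF [_ [<- ElF]]] Hk]].
  set (P := filter (fun p => holds (finite_orbit act p)) lF).
  destruct (exists_dense_orbit X P) as [p [Hp [O [HO Hlen]]]].
  - intros p Hp; apply filter_In in Hp as [_ Hp]; cbv beta in Hp; rewrite holds_iff in Hp.
    exact Hp.
  - intros g.
    destruct (translate_meets_rep F lF g HF (fun x => proj1 (ElF x))) as [p [Fp [Hfin Xp]]].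
    exists p; split; [apply filter_In; rewrite holds_iff; split; [apply ElF|]; assumption|].
    exact Xp.
  - exists p; split; [apply ElF; apply filter_In in Hp; tauto|].
    exists O; split; [exact HO|].
    pose proof (filter_length_le (fun p => holds (finite_orbit act p)) lF).
    unfold P in Hlen; nia.
Qed.

End Family.
End Representatives.
End GroupActions.

Theorem mainTheorem1
  (G U : Type) (mul : G -> G -> G) (one : G) (inv : G -> G)
  (act : G -> U -> U)
  (Hgrp : is_group mul one inv) (Hact : is_action mul one act)
  (Fam : subset U -> Prop) (m : nat)
  (Hinv : family_invariant act Fam)
  (Hbound : forall F, Fam F -> exists k, has_card F k /\ k <= m)
  (X : subset U) (n : nat) (HX : has_card X n) (Hrep : represents X Fam) :
  exists Y : subset U,
    set_invariant act Y /\ represents Y Fam /\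
    exists k, has_card Y k /\ k <= n * m.
Proof.
  destruct HX as [lX [NDX [<- EX]]].
  exists (dense_orbit act X m); split; [|split].
  - apply (set_invariant_of_act Hgrp act Hact); intros g u.
    apply (dense_orbit_act Hgrp act Hact).
  - intros F HF.
    destruct (exists_dense_member Hgrp act Hact Fam X lX Hinv (fun x => proj1 (EX x)) Hrep
                m Hbound F HF) as [f [Ff Hf]].
    exists f; split; assumption.
  - destruct (dense_orbits_card_le Hgrp act Hact X lX m (conj NDX EX)) as [lY [[NDY EY] HlY]].
    exists (length lY); split; [exists lY; auto|lia].
Qed.
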